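(* Let $\mathbf p$ be a Nash-routing of a max game on a graph with $n\ge2$ nodes, with $C=C(\mathbf p)$, $D=D(\mathbf p)$, and let $\mathbf p^*$ be an optimal routing with $C^*=C(\mathbf p^* )$. If $C\ge D+2\lg n+2$, then $C<2LC^*+2\lg n$.
   Context: A routing game $(\mathbf N,G,\mathcal P)$: players $\{1,\dots,N\}$ ($N\ge1$), a simple graph $G=(V,E)$ with $n=|V|$ nodes, and for each player $i$ a nonempty finite set $\mathcal P_i$ of paths from $u_i$ to $v_i$; $L=\max_{p\in\bigcup_i\mathcal P_i}|p|$ (path length = number of edges). A routing is $\mathbf p=[p_1,\dots,p_N]$, $p_i\in\mathcal P_i$. $C_e(\mathbf p)$ = number of players whose path uses edge $e$; $C_i(\mathbf p)=\max_{e\in p_i}C_e(\mathbf p)$; $D_i(\mathbf p)=|p_i|$; $C(\mathbf p)=\max_eC_e(\mathbf p)$; $D(\mathbf p)=\max_i|p_i|$. Max game: player cost $pc_i=\max(C_i,D_i)$, social cost $SC=\max(C,D)$. A Nash-routing is one where no player can strictly lower $pc_i$ by unilaterally changing its path within $\mathcal P_i$; an optimal routing minimizes $SC$. $\lg=\log_2$. *)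

From HB Require Import structures.
From mathcomp Require Import all_boot.
From Stdlib Require Import Reals.
Set Implicit Arguments.
Unset Strict Implicit.
Unset Printing Implicit Defensive.

Definition lg (x : R) : R := (ln x / ln 2)%R.

Section Routing.
Variable V : finType.
Variable adj : rel V.

Definition is_edge (f : {set V}) : bool :=
  [exists x, exists y, adj x y && (f == [set x; y])].

Definition is_path (s t : V) (p : seq V) : bool :=
  match p with
  | [::] => false
  | x :: q => [&& x == s, path adj x q, last x q == t & uniq p]
  end.

Definition plen (p : seq V) : nat := (size p).-1.

Definition pedges (p : seq V) : seq {set V} :=
  match p with
  | [::] => [::]
  | x :: q => pairmap (fun a b => [set a; b]) x q
  end.

Variable N : nat.
Definition routing := 'I_N -> seq V.

Definition game_ok (u v : 'I_N -> V) (P : 'I_N -> seq (seq V)) : Prop :=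
  forall i, P i != [::] /\ all (is_path (u i) (v i)) (P i).

Definition is_routing (P : 'I_N -> seq (seq V)) (r : routing) : Prop :=
  forall i, r i \in P i.

Definition congE (r : routing) (f : {set V}) : nat :=
  #|[set i : 'I_N | f \in pedges (r i)]|.
Definition congP (r : routing) (i : 'I_N) : nat :=
  \max_(f <- pedges (r i)) congE r f.
Definition lenP (r : routing) (i : 'I_N) : nat := plen (r i).
Definition Cong (r : routing) : nat := \max_(f : {set V} | is_edge f) congE r f.
Definition Dil (r : routing) : nat := \max_(i < N) lenP r i.

Definition pc (r : routing) (i : 'I_N) : nat := maxn (congP r i) (lenP r i).
Definition SC (r : routing) : nat := maxn (Cong r) (Dil r).

Definition update (r : routing) (i : 'I_N) (q : seq V) : routing :=
  fun j => if j == i then q else r j.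

Definition Nash (P : 'I_N -> seq (seq V)) (r : routing) : Prop :=
  is_routing P r /\
  forall i q, q \in P i -> pc r i <= pc (update r i q) i.

Definition optimal (P : 'I_N -> seq (seq V)) (r : routing) : Prop :=
  is_routing P r /\ forall r', is_routing P r' -> SC r <= SC r'.

Definition Lmax (P : 'I_N -> seq (seq V)) : nat :=
  \max_(i < N) \max_(p <- P i) plen p.

End Routing.

(* Let p be a Nash routing with congestion C, p* an optimal routing with
   congestion C*, L the maximal path length, and k = floor(lg n^2) <= 2 lg n.
   Suppose, for contradiction, C >= 2 L C* + 2 lg n, so C >= 2 L C* + k.
   For a level t, let heavy(t) be the set of edges of congestion >= t in p.
   Counting player/edge incidences and using Nash stability (a player on a
   heavy(t) edge with t > L would profit by switching to its path in p*
   unless that path meets heavy(t - 1)), one gets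
       |heavy(t)| * t <= L * |heavy(t - 1)| * C*,
   so |heavy(t - 1)| >= 2 |heavy(t)| as long as t >= 2 L C*.  Starting from
   the top level C (which has an edge) and descending k + 1 levels yields
   2^(k+1) > n^2 distinct edges, which a graph on n vertices cannot have. *)

From HB Require Import structures.
From mathcomp Require Import all_boot.
From Stdlib Require Import Reals Lra.
From mathcomp Require Import zify.
(* Reals rebinds [_ ^ _] on nat to Nat.pow; restore ssrnat's expn. *)
Import ssrnat.

Set Implicit Arguments.
Unset Strict Implicit.
Unset Printing Implicit Defensive.

Lemma bigmax_witness (I : eqType) (r : seq I) (P : pred I) (F : I -> nat) m :
  0 < m -> m <= \max_(i <- r | P i) F i -> exists2 i, (i \in r) && P i & m <= F i.
Proof.
move=> m_gt0 le_m_max.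
have [/hasP[i ri /andP[Pi le_m_Fi]]|/hasPn small] :=
  boolP (has (fun i => P i && (m <= F i)) r); first by exists i; rewrite ?ri ?Pi.
suff : \max_(i <- r | P i) F i <= m.-1.
  by rewrite leqNgt (leq_trans _ le_m_max) ?ltn_predL.
apply/bigmax_leqP_seq => i ri Pi.
by rewrite -ltnS prednK // ltnNge; have := small i ri; rewrite Pi.
Qed.

Lemma doubling_growth (a : nat -> nat) (k : nat) :
  (forall j, j <= k -> 2 * a j <= a j.+1) ->
  forall j, j <= k.+1 -> 2 ^ j * a 0 <= a j.
Proof.
move=> dbl; elim=> [|j IHj] le_jk; first by rewrite mul1n.
apply: leq_trans (dbl j le_jk); rewrite expnS -mulnA leq_mul2l.
by rewrite IHj // ltnW.
Qed.

Section Paths.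
Variables (V : finType) (adj : rel V).

Lemma path_edges (s t : V) (q : seq V) :
  is_path adj s t q -> all (is_edge adj) (pedges q).
Proof.
case: q => // x q /and4P[_ + _ _]; elim: q x => [|y q IHq] x //= /andP[xy yq].
rewrite IHq // andbT; apply/existsP; exists x; apply/existsP; exists y.
by rewrite xy eqxx.
Qed.

Lemma size_pedges (q : seq V) : size (pedges q) = plen q.
Proof. by case: q => //= x q; rewrite size_pairmap. Qed.

Lemma plen_gt0 (q : seq V) (f : {set V}) : f \in pedges q -> 0 < plen q.
Proof. by rewrite -size_pedges; case: (pedges q). Qed.

(* Since paths repeat no vertex, a u-v path has an edge iff u <> v. *)
Lemma plen_gt0_endpoints (s t : V) (q : seq V) :
  is_path adj s t q -> (0 < plen q) = (s != t).
Proof.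
case: q => // x [|y q] /and4P[/eqP <- _ /eqP <-] /=; first by rewrite eqxx.
case/andP=> x_notin _; apply/esym; apply: contraNneq x_notin => ->.
exact: mem_last.
Qed.

Lemma card_edge_set (E : {set {set V}}) :
  {subset E <= is_edge adj} -> #|E| <= #|V| * #|V|.
Proof.
move=> E_edges; apply: (@leq_trans #|[set [set x.1; x.2] | x in [set: V * V]]|).
  apply/subset_leq_card/subsetP => f /E_edges/existsP[x /existsP[y /andP[_ /eqP ->]]].
  by apply/imsetP; exists (x, y).
by apply: leq_trans (leq_imset_card _ _) _; rewrite cardsT card_prod.
Qed.

End Paths.

Section Congestion.
Variables (V : finType) (adj : rel V) (N : nat).
Implicit Types (r p : routing V N) (P : 'I_N -> seq (seq V)) (f : {set V}).
Implicit Types (H : {set {set V}}).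

Lemma congE_update r i q f : congE (update r i q) f <= (congE r f).+1.
Proof.
apply: (@leq_trans #|i |: [set j | f \in pedges (r j)]|).
  apply/subset_leq_card/subsetP => j; rewrite !inE /update.
  by case: eqP => // _ ->; rewrite orbT.
by rewrite cardsU1 -add1n leq_add2r leq_b1.
Qed.

Lemma congE_le_congP r i f : f \in pedges (r i) -> congE r f <= congP r i.
Proof. by move=> f_on_i; apply: leq_bigmax_seq. Qed.

Lemma congE_le_Cong r f : is_edge adj f -> congE r f <= Cong adj r.
Proof. exact: leq_bigmax_cond. Qed.

Lemma Cong_witness r :
  0 < Cong adj r -> exists2 f, is_edge adj f & Cong adj r <= congE r f.
Proof.
move=> Cr_gt0; have [f /andP[_ ef] le_Cr] := bigmax_witness Cr_gt0 (leqnn (Cong adj r)).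
by exists f.
Qed.

Lemma Cong_gt0 r i :
  all (is_edge adj) (pedges (r i)) -> 0 < plen (r i) -> 0 < Cong adj r.
Proof.
rewrite -size_pedges; case E: (pedges (r i)) => [|f fs] //= /andP[ef _] _.
apply: leq_trans (congE_le_Cong r ef); apply/card_gt0P; exists i.
by rewrite inE E mem_head.
Qed.

Definition heavy r t : {set {set V}} := [set f | is_edge adj f && (t <= congE r f)].

Definition load r H i : nat := #|[set f in H | f \in pedges (r i)]|.

Lemma load_le_plen r H i : load r H i <= plen (r i).
Proof.
rewrite -size_pedges; apply: leq_trans (card_size _).
by apply/subset_leq_card/subsetP => f; rewrite !inE => /andP[].
Qed.

Lemma sum_congE_load r H : \sum_(f in H) congE r f = \sum_i load r H i.
Proof.
have congE_sum f : congE r f = \sum_i (f \in pedges (r i)).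
  rewrite /congE -sum1_card big_mkcond; apply: eq_bigr => i _.
  by rewrite inE; case: (_ \in _).
have load_sum i : load r H i = \sum_(f in H) (f \in pedges (r i)).
  rewrite /load -sum1_card big_mkcond [RHS]big_mkcond; apply: eq_bigr => f _.
  by rewrite inE; case: (f \in H); case: (_ \in _).
under eq_bigr do rewrite congE_sum.
by rewrite exchange_big; apply: eq_bigr => i _; rewrite load_sum.
Qed.

(* Nash stability: if player i crosses an edge of congestion >= t while some
   path q available to it is shorter than t, then q must cross an edge of
   congestion >= t - 1 in p (else switching to q would be profitable). *)
Lemma nash_reroute P p i q f t :
  Nash P p -> q \in P i -> plen q < t ->
  f \in pedges (p i) -> t <= congE p f ->
  exists2 g, g \in pedges q & t.-1 <= congE p g.
Proof.
case=> _ stable qPi lt_q_t f_on_i le_t_f.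
have le_t_pc : t <= pc p i.
  exact: leq_trans le_t_f (leq_trans (congE_le_congP f_on_i) (leq_maxl _ _)).
have := leq_trans le_t_pc (stable i q qPi).
have upd_i : update p i q i = q by rewrite /update eqxx.
rewrite /pc /lenP upd_i leq_max [t <= plen q]leqNgt lt_q_t orbF /congP upd_i.
case/(bigmax_witness (leq_ltn_trans (leq0n _) lt_q_t)) => g /andP[g_on_q _] le_t_g.
exists g => //; rewrite -subn1 leq_subLR add1n.
exact: leq_trans le_t_g (congE_update p i q g).
Qed.

Section HeavyEdges.
(* A Nash routing p, a comparison routing ps of the same game (later the
   optimum), an upper bound Ls on all path lengths and an upper bound cs on
   the congestion of ps. *)
Variables (P : 'I_N -> seq (seq V)) (p ps : routing V N) (Ls cs : nat).
Hypothesis nash : Nash P p.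
Hypothesis ps_route : is_routing P ps.
Hypothesis ps_edges : forall i, all (is_edge adj) (pedges (ps i)).
Hypothesis le_p : forall i, plen (p i) <= Ls.
Hypothesis le_ps : forall i, plen (ps i) <= Ls.
Hypothesis le_cs : forall f, is_edge adj f -> congE ps f <= cs.

(* Per-player form of the key inequality: if player i crosses an edge of
   congestion >= t > Ls in p, then its path in ps crosses an edge of
   congestion >= t - 1 in p; the left side is at most Ls, the right side
   at least Ls. *)
Lemma load_reroute i t :
  Ls < t -> load p (heavy p t) i <= Ls * load ps (heavy p t.-1) i.
Proof.
move=> lt_Ls_t.
rewrite {1}/load; have [->|[f]] := set_0Vmem [set f in heavy p t | f \in pedges (p i)].
  by rewrite cards0.
rewrite !inE => /andP[/andP[_ le_t_f] f_on_i].
have [g g_on_ps le_g] :=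
  nash_reroute nash (ps_route i) (leq_ltn_trans (le_ps i) lt_Ls_t) f_on_i le_t_f.
have load_gt0 : 0 < load ps (heavy p t.-1) i.
  by apply/card_gt0P; exists g; rewrite !inE g_on_ps le_g (allP (ps_edges i) g g_on_ps).
apply: leq_trans (leq_trans (load_le_plen _ _ _) (le_p i)) _.
by rewrite leq_pmulr.
Qed.

(* Summing over players: each heavy edge of level t carries at least t
   players of p, each of those forces Ls crossings by ps of level-(t - 1)
   edges, and each such edge carries at most cs players of ps. *)
Lemma heavy_count t : Ls < t -> #|heavy p t| * t <= Ls * (#|heavy p t.-1| * cs).
Proof.
move=> lt_Ls_t; rewrite -!sum_nat_const.
apply: (@leq_trans (\sum_(f in heavy p t) congE p f)).
  by apply: leq_sum => f; rewrite inE => /andP[].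
rewrite sum_congE_load.
apply: (@leq_trans (\sum_i Ls * load ps (heavy p t.-1) i)).
  by apply: leq_sum => i _; apply: load_reroute.
rewrite -big_distrr -sum_congE_load leq_mul2l; apply/orP; right.
by apply: leq_sum => f; rewrite inE => /andP[ef _]; apply: le_cs.
Qed.

Lemma heavy_doubling t :
  0 < Ls * cs -> 2 * (Ls * cs) <= t -> 2 * #|heavy p t| <= #|heavy p t.-1|.
Proof.
move=> M_gt0 le_2M_t.
have le_Ls_M : Ls <= Ls * cs.
  by rewrite leq_pmulr //; move: M_gt0; rewrite muln_gt0 => /andP[].
have lt_Ls_t : Ls < t by lia.
have count := heavy_count lt_Ls_t.
rewrite -(leq_pmul2r M_gt0); apply: leq_trans (_ : #|heavy p t| * t <= _).
  by rewrite mulnAC mulnC leq_mul2l le_2M_t orbT.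
by rewrite mulnCA in count.
Qed.

(* Iterating the doubling from the top level C(p) down k + 1 levels, which
   stays above 2 Ls cs when C(p) >= 2 Ls cs + k: there are then at least
   2^(k+1) edges of congestion >= C(p) - (k + 1). *)
Lemma heavy_growth k :
  0 < Ls * cs -> 2 * (Ls * cs) + k <= Cong adj p ->
  2 ^ k.+1 <= #|heavy p (Cong adj p - k.+1)|.
Proof.
move=> M_gt0 le_C.
have C_gt0 : 0 < Cong adj p by lia.
have [f0 ef0 le_C_f0] := Cong_witness C_gt0.
have heavy_top : 0 < #|heavy p (Cong adj p - 0)|.
  by apply/card_gt0P; exists f0; rewrite inE subn0 ef0 le_C_f0.
have doubling j : j <= k ->
    2 * #|heavy p (Cong adj p - j)| <= #|heavy p (Cong adj p - j.+1)|.
  by move=> le_jk; rewrite subnS; apply: heavy_doubling => //; lia.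
have := doubling_growth (a := fun j => #|heavy p (Cong adj p - j)|) doubling (leqnn k.+1).
by apply: leq_trans; rewrite leq_pmulr.
Qed.

End HeavyEdges.
End Congestion.

Lemma plen_le_Lmax (V : finType) (N : nat) (P : 'I_N -> seq (seq V)) i q :
  q \in P i -> plen q <= Lmax P.
Proof. by move=> qPi; apply: leq_trans (leq_bigmax i); apply: leq_bigmax_seq qPi _. Qed.

Lemma routing_edges (V : finType) (adj : rel V) (N : nat) u v
    (P : 'I_N -> seq (seq V)) (r : routing V N) :
  game_ok adj u v P -> is_routing P r -> forall i, all (is_edge adj) (pedges (r i)).
Proof. by move=> game r_route i; apply: path_edges (allP (game i).2 _ (r_route i)). Qed.

(* If a Nash routing has positive congestion, some player i crosses an edge,
   so u_i <> v_i; then every routing gives player i an edge, hence L >= 1 and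
   every routing (in particular the optimum) has congestion >= 1. *)
Lemma Lmax_Cong_gt0 (V : finType) (adj : rel V) (N : nat) u v
    (P : 'I_N -> seq (seq V)) (p ps : routing V N) :
  game_ok adj u v P -> Nash P p -> is_routing P ps ->
  0 < Cong adj p -> 0 < Lmax P * Cong adj ps.
Proof.
move=> game nash ps_route C_gt0.
have [f0 _ le_C_f0] := Cong_witness C_gt0.
have [i f0_on_i] : exists i, f0 \in pedges (p i).
  by have /card_gt0P[i] := leq_trans C_gt0 le_C_f0; rewrite inE; exists i.
have ps_i_gt0 : 0 < plen (ps i).
  rewrite (plen_gt0_endpoints (allP (game i).2 _ (ps_route i))).
  by rewrite -(plen_gt0_endpoints (allP (game i).2 _ (nash.1 i))) (plen_gt0 f0_on_i).
rewrite muln_gt0 (leq_trans (plen_gt0 f0_on_i) (plen_le_Lmax (nash.1 i))).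
exact: Cong_gt0 (routing_edges game ps_route i) ps_i_gt0.
Qed.

Lemma INR_expn (m k : nat) : INR (m ^ k) = (INR m ^ k)%R.
Proof. by elim: k => [|k IHk]; rewrite ?expn0 // expnS mult_INR IHk. Qed.

Lemma pow2_le_sq_lg (n k : nat) :
  0 < n -> 2 ^ k <= n * n -> (INR k <= 2 * lg (INR n))%R.
Proof.
move=> /ltP/lt_0_INR n_pos /leP/le_INR; rewrite mult_INR INR_expn => le_pow.
have ln2_pos : (0 < ln 2)%R by have := ln_lt_2; lra.
have two : INR 2 = 2%R by rewrite /=; lra.
have le_ln : (INR k * ln 2 <= 2 * ln (INR n))%R.
  apply: Rnot_lt_le => lt_ln.
  suff : (INR n * INR n < 2 ^ k)%R by rewrite two in le_pow; lra.
  apply: ln_lt_inv; [nra | apply: pow_lt; lra |].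
  by rewrite ln_mult // ln_pow; lra.
apply: (Rmult_le_reg_r (ln 2)) => //; rewrite /lg.
by replace (2 * (ln (INR n) / ln 2) * ln 2)%R with (2 * ln (INR n))%R by (field; lra).
Qed.

Theorem mainTheorem5 (N : nat) (V : finType) (adj : rel V)
    (u v : 'I_N -> V) (P : 'I_N -> seq (seq V)) (p pstar : 'I_N -> seq V) :
  0 < N ->
  symmetric adj -> irreflexive adj ->
  2 <= #|V| ->
  game_ok adj u v P ->
  Nash P p ->
  optimal adj P pstar ->
  (INR (Cong adj p) >= INR (Dil p) + 2 * lg (INR #|V|) + 2)%R ->
  (INR (Cong adj p) < 2 * INR (Lmax P) * INR (Cong adj pstar) + 2 * lg (INR #|V|))%R.
Proof.
move=> _ _ _ n_ge2 game nash [ps_route _] _; apply: Rnot_le_lt => le_bound.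
set n := #|V| in n_ge2 le_bound *.
(* k = floor(lg n^2), so that 2^k <= n^2 < 2^(k+1) and k <= 2 lg n. *)
set k := trunc_log 2 (n * n).
have n_gt0 : 0 < n by apply: leq_trans n_ge2.
have pow_k_le : 2 ^ k <= n * n by apply: trunc_logP; rewrite ?muln_gt0 ?n_gt0.
have lt_pow_k : n * n < 2 ^ k.+1 by apply: trunc_log_ltn.
have k_gt0 : 0 < k by apply: trunc_log_max; rewrite // expn1 (leq_trans n_ge2) ?leq_pmulr.
(* The negated conclusion, in natural numbers: C >= 2 L C* + k. *)
have le_C : 2 * (Lmax P * Cong adj pstar) + k <= Cong adj p.
  apply/leP/INR_le; rewrite plus_INR !mult_INR.
  have := pow2_le_sq_lg n_gt0 pow_k_le; have -> : INR 2 = 2%R by rewrite /=; lra.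
  nra.
have C_gt0 : 0 < Cong adj p by lia.
(* Doubling the heavy edges k + 1 times exceeds the n^2 possible edges. *)
have M_gt0 := Lmax_Cong_gt0 game nash ps_route C_gt0.
have growth := heavy_growth nash ps_route (routing_edges game ps_route)
  (fun i => plen_le_Lmax (nash.1 i)) (fun i => plen_le_Lmax (ps_route i))
  (@congE_le_Cong _ adj _ pstar) M_gt0 le_C.
have le_card : #|heavy adj p (Cong adj p - k.+1)| <= n * n.
  by apply: (@card_edge_set _ adj) => f; rewrite inE => /andP[].
by have := leq_trans growth le_card; rewrite leqNgt lt_pow_k.
Qed.
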